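(* Assume the following setting. For each $n$, $X\in\mathbb{R}^{n\times e}$ is deterministic with rows $x_i$; $\Gamma\in\mathbb{R}^{e\times p}$, $\sigma^2>0$, $\sigma_z^2>0$, $e,p$ are fixed; $\lambda\ge0$ and $\beta_0\in\mathbb{R}^e$ depend on $n$. Let $y=X\beta_0+\epsilon$, $Z=X\Gamma+E$, with entries of $E$ i.i.d. $N(0,\sigma_z^2)$, entries of $\epsilon$ i.i.d. $N(0,\sigma^2)$, $E,\epsilon$ independent. Assume as $n\to\infty$: $\lambda/n\to\kappa\ge0$; $\sqrt n\beta_0\to\alpha_0$; $\frac1nX^TX\to\Sigma$ positive definite; $\frac1n\mathbf{1}^TX\to\Theta\in\mathbb{R}^{1\times e}$; $\max_i\|x_i\|=o(n^{1/3})$. Let $\tilde Z=[\mathbf{1},Z]\in\mathbb{R}^{n\times(p+1)}$, and let $\tilde Z_{(i)}$, $X_{(i)}$ be $\tilde Z$, $X$ with their $i$-th rows removed. Then as $n\to\infty$, $\|\tilde Z^TX\|=O_P(n)$ and $$\max_{1\le i\le n}\|\tilde Z^TX-\tilde Z_{(i)}^TX_{(i)}\|=o_P(n).$$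
   Context: $\|M\|$ denotes the $\ell^2$ operator norm of a matrix $M$; $O_P,o_P$ refer to $n\to\infty$. *)

From HB Require Import structures.
From mathcomp Require Import all_boot all_order all_algebra.
From mathcomp Require Import all_classical all_reals all_analysis.
Set Implicit Arguments. Unset Strict Implicit. Unset Printing Implicit Defensive.
Import Order.TTheory GRing.Theory Num.Theory.
Import numFieldNormedType.Exports.
Local Open Scope classical_set_scope.
Local Open Scope ring_scope.

Definition vnorm {R : realType} {k : nat} (v : 'cV[R]_k) : R :=
  Num.sqrt (\sum_(j < k) v j 0 ^+ 2).

Definition rnorm {R : realType} {k : nat} (v : 'rV[R]_k) : R :=
  Num.sqrt (\sum_(j < k) v 0 j ^+ 2).

Definition opnorm {R : realType} {m k : nat} (A : 'M[R]_(m, k)) : R :=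
  sup [set vnorm (A *m v) | v in [set v : 'cV[R]_k | vnorm v <= 1]].

Definition posdef {R : realType} {k : nat} (S : 'M[R]_k) : Prop :=
  S^T = S /\ forall v : 'cV[R]_k, v != 0 -> 0 < (v^T *m S *m v) 0 0.

Definition mutually_independent d (T : measurableType d) (R : realType)
    (P : probability T R) (I : finType) (Y : I -> {RV P >-> R}) : Prop :=
  forall (J : {set I}) (B : I -> set R), (forall i, measurable (B i)) ->
    P (\bigcap_(i in [set i | i \in J]) (Y i @^-1` B i)) =
    (\prod_(i in J) P (Y i @^-1` B i))%E.

Definition OP_bound d (T : measurableType d) (R : realType) (P : probability T R)
    (Y : nat -> T -> R) (r : nat -> R) : Prop :=
  forall delta : R, 0 < delta -> exists M : R, 0 < M /\
    \forall n \near \oo, (P [set w | (M * r n < Y n w)%R] <= delta%:E)%E.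

Definition oP_bound d (T : measurableType d) (R : realType) (P : probability T R)
    (Y : nat -> T -> R) (r : nat -> R) : Prop :=
  forall eps delta : R, 0 < eps -> 0 < delta ->
    \forall n \near \oo, (P [set w | (eps * r n < Y n w)%R] <= delta%:E)%E.

Definition Emat d (T : measurableType d) (R : realType) (P : probability T R)
    (n p : nat) (E : 'I_n -> 'I_p -> {RV P >-> R}) (w : T) : 'M[R]_(n, p) :=
  \matrix_(i, j) E i j w.

Definition Ztilde {R : realType} (n e p : nat) (X : 'M[R]_(n, e))
    (Gamma : 'M[R]_(e, p)) (Em : 'M[R]_(n, p)) : 'M[R]_(n, 1 + p) :=
  row_mx (const_mx 1) (X *m Gamma + Em).

From HB Require Import structures.
From mathcomp Require Import all_boot all_order all_algebra.
From mathcomp Require Import all_classical all_reals all_analysis.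
From mathcomp Require Import measurable_realfun.
From mathcomp Require Import ring lra.
Set Implicit Arguments.
Unset Strict Implicit.
Unset Printing Implicit Defensive.
Import Order.TTheory GRing.Theory Num.Theory.
Import numFieldNormedType.Exports.
Local Open Scope classical_set_scope.
Local Open Scope ring_scope.

(** All bounds go through Frobenius norms, which dominate operator norms and
    are submultiplicative: |Z~^T X| <= |Z~|_F |X|_F, where
    |X|_F^2 = tr (X^T X) = O(n) because X^T X / n converges, and
    |Z~|_F^2 <= n + 2 |X|_F^2 |Gamma|_F^2 + 2 |E|_F^2.  The Gaussian entries of
    E have bounded second moments, so E |E|_F^2 = O(n) and Markov's inequality
    gives |Z~|_F^2 = O_P(n).  Deleting row i changes Z~^T X by the rank-one
    matrix z~_i^T x_i, whose norm is at most
    |Z~|_F |x_i| = O_P(n^(1/2)) o(n^(1/3)) = o_P(n).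
    Only the Gaussian law of the entries of E and the two conditions on X are
    used.  The events are measurable
    because the supremum defining the operator norm can be taken over a
    countable family of rational vectors. *)

Section Frobenius.
Variable R : realType.

Definition frob2 {m k : nat} (A : 'M[R]_(m, k)) : R := \sum_i \sum_j A i j ^+ 2.

Lemma frob2_ge0 m k (A : 'M[R]_(m, k)) : 0 <= frob2 A.
Proof. by do 2![apply: sumr_ge0 => ? _]; exact: sqr_ge0. Qed.

Lemma cauchy_schwarz_sum k (a b : 'I_k -> R) :
  (\sum_i a i * b i) ^+ 2 <= (\sum_i a i ^+ 2) * (\sum_i b i ^+ 2).
Proof.
pose F i j := a i ^+ 2 * b j ^+ 2 - a i * b i * (a j * b j).
have sumF : \sum_i \sum_j F i j =
    (\sum_i a i ^+ 2) * (\sum_i b i ^+ 2) - (\sum_i a i * b i) ^+ 2.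
  by rewrite expr2 !big_distrlr -sumrB; apply: eq_bigr => i _; rewrite -sumrB.
have lagrange : \sum_i \sum_j (a i * b j - a j * b i) ^+ 2 = 2 * \sum_i \sum_j F i j.
  transitivity (\sum_i \sum_j (F i j + F j i)).
    by apply: eq_bigr => i _; apply: eq_bigr => j _; rewrite /F; ring.
  under eq_bigr do rewrite big_split /=.
  by rewrite big_split /= [X in _ + X]exchange_big; ring.
have : 0 <= \sum_i \sum_j (a i * b j - a j * b i) ^+ 2.
  by do 2![apply: sumr_ge0 => ? _]; exact: sqr_ge0.
by rewrite lagrange sumF pmulr_rge0 // subr_ge0.
Qed.

Lemma frob2Z m k a (A : 'M[R]_(m, k)) : frob2 (a *: A) = a ^+ 2 * frob2 A.
Proof.
rewrite /frob2 mulr_sumr; apply: eq_bigr => i _; rewrite mulr_sumr.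
by apply: eq_bigr => j _; rewrite mxE exprMn.
Qed.

Lemma frob2_tr m k (A : 'M[R]_(m, k)) : frob2 A^T = frob2 A.
Proof.
by rewrite /frob2 exchange_big; apply: eq_bigr => i _; apply: eq_bigr => j _; rewrite mxE.
Qed.

Lemma frob2_mulmx m k l (A : 'M[R]_(m, k)) (B : 'M[R]_(k, l)) :
  frob2 (A *m B) <= frob2 A * frob2 B.
Proof.
rewrite /frob2 [X in _ * X]exchange_big big_distrlr /=.
by apply: ler_sum => i _; apply: ler_sum => j _; rewrite mxE; exact: cauchy_schwarz_sum.
Qed.

Lemma frob2D_le m k (A B : 'M[R]_(m, k)) : frob2 (A + B) <= 2 * frob2 A + 2 * frob2 B.
Proof.
rewrite /frob2 !mulr_sumr -big_split /=; apply: ler_sum => i _.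
rewrite !mulr_sumr -big_split /=; apply: ler_sum => j _; rewrite mxE.
rewrite -subr_ge0 (_ : _ - _ = (A i j - B i j) ^+ 2) ?sqr_ge0 //; ring.
Qed.

Lemma frob2_row_le m k (A : 'M[R]_(m, k)) i : frob2 (row i A) <= frob2 A.
Proof.
rewrite /frob2 big_ord1 (bigD1 i) //=.
under eq_bigr do rewrite mxE.
by rewrite lerDl; do 2![apply: sumr_ge0 => ? _]; exact: sqr_ge0.
Qed.

Lemma frob2_mxtrace m k (A : 'M[R]_(m, k)) : frob2 A = \tr (A^T *m A).
Proof.
rewrite /frob2 /mxtrace exchange_big; apply: eq_bigr => j _; rewrite mxE.
by apply: eq_bigr => i _; rewrite mxE expr2.
Qed.

Lemma rnorm_sqr k (x : 'rV[R]_k) : rnorm x ^+ 2 = frob2 x.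
Proof. by rewrite /rnorm /frob2 big_ord1 sqr_sqrtr //; apply: sumr_ge0 => j _; exact: sqr_ge0. Qed.

Lemma vnormE k (v : 'cV[R]_k) : vnorm v = Num.sqrt (frob2 v).
Proof. by rewrite /vnorm /frob2; under [in RHS]eq_bigr do rewrite big_ord1. Qed.

Lemma vnorm_mulmx_le m k (A : 'M[R]_(m, k)) v :
  vnorm (A *m v) <= Num.sqrt (frob2 A) * vnorm v.
Proof. by rewrite !vnormE -sqrtrM ?frob2_ge0 // ler_sqrt ?mulr_ge0 ?frob2_ge0 // frob2_mulmx. Qed.

Lemma opnorm_has_sup m k (A : 'M[R]_(m, k)) :
  has_sup [set vnorm (A *m v) | v in [set v : 'cV[R]_k | vnorm v <= 1]].
Proof.
split.
  exists (vnorm (A *m 0)), 0 => //=.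
  by rewrite vnormE /frob2 big1 ?sqrtr0 // => i _; rewrite big1 // => j _; rewrite mxE expr0n.
exists (Num.sqrt (frob2 A)) => _ [v /= v1 <-]; apply: le_trans (vnorm_mulmx_le A v) _.
by rewrite -[leRHS]mulr1 ler_wpM2l // sqrtr_ge0.
Qed.

Lemma opnorm_le_frob m k (A : 'M[R]_(m, k)) : opnorm A <= Num.sqrt (frob2 A).
Proof.
apply: ge_sup; first by case: (opnorm_has_sup A).
move=> _ [v /= v1 <-]; apply: le_trans (vnorm_mulmx_le A v) _.
by rewrite -[leRHS]mulr1 ler_wpM2l // sqrtr_ge0.
Qed.

Lemma frob2_Ztilde n e p (X : 'M[R]_(n, e)) (G : 'M[R]_(e, p)) (Em : 'M[R]_(n, p)) :
  frob2 (Ztilde X G Em) = n%:R + frob2 (X *m G + Em).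
Proof.
rewrite /frob2 /Ztilde.
under eq_bigr do rewrite big_split_ord /= big_ord1 row_mxEl mxE expr1n.
rewrite big_split /= sumr_const card_ord; congr (_ + _).
by apply: eq_bigr => i _; apply: eq_bigr => j _; rewrite row_mxEr.
Qed.

Lemma mulmx_tr_row' n q e (Z : 'M[R]_(n, q)) (X : 'M[R]_(n, e)) i :
  Z^T *m X - (row' i Z)^T *m row' i X = (row i Z)^T *m row i X.
Proof.
apply/matrixP => a b; rewrite !mxE (bigD1_ord i) //= big_ord1.
under eq_bigr do rewrite mxE.
under [X in _ - X]eq_bigr do rewrite !mxE.
by rewrite addrK !mxE.
Qed.

Lemma opnorm_trmx_mulmx_le n q e (Z : 'M[R]_(n, q)) (X : 'M[R]_(n, e)) :
  opnorm (Z^T *m X) <= Num.sqrt (frob2 Z * frob2 X).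
Proof.
apply: le_trans (opnorm_le_frob _) _; rewrite ler_sqrt ?mulr_ge0 ?frob2_ge0 //.
by rewrite -(frob2_tr Z) frob2_mulmx.
Qed.

Lemma opnorm_row'_le n q e (Z : 'M[R]_(n, q)) (X : 'M[R]_(n, e)) i :
  opnorm (Z^T *m X - (row' i Z)^T *m row' i X) <= Num.sqrt (frob2 Z) * rnorm (row i X).
Proof.
rewrite mulmx_tr_row'; apply: le_trans (opnorm_le_frob _) _.
rewrite -[rnorm _]ger0_norm ?sqrtr_ge0 // -sqrtr_sqr -sqrtrM ?frob2_ge0 // rnorm_sqr.
rewrite ler_sqrt ?mulr_ge0 ?frob2_ge0 //; apply: le_trans (frob2_mulmx _ _) _.
by rewrite frob2_tr ler_wpM2r ?frob2_ge0 ?frob2_row_le.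
Qed.

Lemma frob2_Ztilde_le n e p (X : 'M[R]_(n, e)) (G : 'M[R]_(e, p)) (Em : 'M[R]_(n, p)) (C M : R) :
  frob2 X <= C * n%:R -> frob2 Em <= M * n%:R ->
  frob2 (Ztilde X G Em) <= (1 + 2 * C * frob2 G + 2 * M) * n%:R.
Proof.
move=> XC EM; rewrite frob2_Ztilde; apply: le_trans (lerD (lexx _) (frob2D_le _ _)) _.
have : frob2 (X *m G) <= C * n%:R * frob2 G.
  by apply: le_trans (frob2_mulmx _ _) _; rewrite ler_wpM2r ?frob2_ge0.
nra.
Qed.

End Frobenius.

Section RationalVectors.
Variable R : realType.

Definition ratcV {k : nat} (z : 'cV[int]_k * nat) : 'cV[R]_k :=
  (z.2.+1%:R)^-1 *: map_mx (fun a : int => a%:~R) z.1.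

Lemma floor_mulr_cvg (x : R) :
  (fun N : nat => (N.+1%:R)^-1 * (Num.floor (x * N.+1%:R))%:~R) @ \oo --> x.
Proof.
apply/cvgrPdist_lt => eps eps0; near=> N.
have N0 : 0 < N.+1%:R :> R by rewrite ltr0n.
have := floor_le (x * N.+1%:R); have := floorD1_gt (x * N.+1%:R).
rewrite intrD; set a := (Num.floor _)%:~R => a_gt a_le.
have -> : x - (N.+1%:R)^-1 * a = (N.+1%:R)^-1 * (x * N.+1%:R - a).
  by field; rewrite gt_eqF.
rewrite normrM ger0_norm ?invr_ge0 ?ler0n // ger0_norm ?subr_ge0 //.
have Neps : N.+1%:R^-1 < eps by near: N; exact: (near_infty_natSinv_lt (PosNum eps0)).
rewrite (le_lt_trans _ Neps) // -[leRHS]mulr1 ler_wpM2l ?invr_ge0 ?ler0n //; lra.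
Unshelve. all: end_near.
Qed.

Lemma ratcV_floor_cvg k (u : 'cV[R]_k) :
  forall i j, (fun N => ratcV (map_mx (fun x => Num.floor (x * N.+1%:R)) u, N) i j) @ \oo --> u i j.
Proof. by move=> i j; under eq_fun do rewrite !mxE; exact: floor_mulr_cvg. Qed.

Lemma cvg_frob2 m k (f : nat -> 'M[R]_(m, k)) (A : 'M[R]_(m, k)) :
  (forall i j, (fun N => f N i j) @ \oo --> A i j) ->
  (fun N => frob2 (f N)) @ \oo --> frob2 A.
Proof.
move=> fA; apply: cvg_big => // [|i _]; first exact: add_continuous.
apply: cvg_big => // [|j _]; first exact: add_continuous.
by under eq_fun do rewrite expr2; rewrite expr2; apply: cvgM; exact: fA.
Qed.

Lemma cvg_mulmx m k l (B : 'M[R]_(m, k)) (f : nat -> 'M[R]_(k, l)) (A : 'M[R]_(k, l)) :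
  (forall i j, (fun N => f N i j) @ \oo --> A i j) ->
  forall i j, (fun N => (B *m f N) i j) @ \oo --> (B *m A) i j.
Proof.
move=> fA i j; under eq_fun do rewrite mxE; rewrite mxE.
apply: cvg_big => // [|l' _]; first exact: add_continuous.
by apply: cvgM; [exact: cvg_cst | exact: fA].
Qed.

Lemma opnorm_gt_ratcV m k (A : 'M[R]_(m, k)) c : 0 <= c ->
  c < opnorm A <->
  exists z, frob2 (ratcV z) < 1 /\ c ^+ 2 < frob2 (A *m ratcV z).
Proof.
move=> c0; have [supA_ne _] := opnorm_has_sup A; split.
- move=> /(sup_gt supA_ne) [_ [v /= v1 <-] cg]; set g := vnorm (A *m v) in cg.
  have g0 : 0 < g by exact: le_lt_trans cg.
  pose t := (c + g) / (2 * g).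
  have t0 : 0 <= t by rewrite divr_ge0 ?mulr_ge0 // ?addr_ge0 // ltW.
  have t1 : t < 1 by rewrite ltr_pdivrMr ?mulr_gt0 //; lra.
  have tv1 : frob2 (t *: v) < 1.
    have fv1 : frob2 v <= 1.
      by rewrite -[frob2 v]sqr_sqrtr ?frob2_ge0 // -vnormE expr_le1 // vnormE sqrtr_ge0.
    by rewrite frob2Z (le_lt_trans (ler_wpM2l (sqr_ge0 t) fv1)) // mulr1 expr_lt1.
  have Atv : c ^+ 2 < frob2 (A *m (t *: v)).
    rewrite -scalemxAr frob2Z -[frob2 _]sqr_sqrtr ?frob2_ge0 // -vnormE -/g -exprMn.
    have -> : t * g = (c + g) / 2 by rewrite /t; field; rewrite gt_eqF.
    by rewrite ltr_pXn2r ?nnegrE ?divr_ge0 ?addr_ge0 ?(ltW g0) //; lra.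
  pose z N := (map_mx (fun x => Num.floor (x * N.+1%:R)) (t *: v), N).
  have zv := ratcV_floor_cvg (u := t *: v).
  have : \forall N \near \oo,
      frob2 (ratcV (z N)) < 1 /\ c ^+ 2 < frob2 (A *m ratcV (z N)).
    near=> N; split; near: N.
    + exact: cvgr_lt (cvg_frob2 zv) _ tv1.
    + exact: cvgr_gt (cvg_frob2 (cvg_mulmx (B := A) zv)) _ Atv.
  by move=> /filter_ex [N zN]; exists (z N).
- move=> [z [z1 Az]]; apply: lt_le_trans (sup_upper_bound (opnorm_has_sup A) _); last first.
    by exists (ratcV z) => //=; rewrite vnormE -sqrtr1 ler_sqrt // ltW.
  by rewrite vnormE -(ger0_norm c0) -sqrtr_sqr ltr_sqrt // (le_lt_trans _ Az) ?sqr_ge0.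
Unshelve. all: end_near.
Qed.

End RationalVectors.

Section MeasurableMatrices.
Context d (T : measurableType d) (R : realType).

Definition measurable_mx {m k : nat} (A : T -> 'M[R]_(m, k)) : Prop :=
  forall i j, measurable_fun setT (fun w => A w i j).

Lemma measurable_mx_cst m k (M : 'M[R]_(m, k)) : measurable_mx (fun _ => M).
Proof. by move=> i j; exact: measurable_cst. Qed.

Lemma measurable_mxD m k (A B : T -> 'M[R]_(m, k)) :
  measurable_mx A -> measurable_mx B -> measurable_mx (fun w => A w + B w).
Proof. by move=> mA mB i j; under eq_fun do rewrite mxE; exact: measurable_funD. Qed.

Lemma measurable_mx_mulmx m k l (A : T -> 'M[R]_(m, k)) (B : T -> 'M[R]_(k, l)) :
  measurable_mx A -> measurable_mx B -> measurable_mx (fun w => A w *m B w).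
Proof.
move=> mA mB i j; under eq_fun do rewrite mxE.
by apply: measurable_sum => l'; exact: measurable_funM.
Qed.

Lemma measurable_mx_tr m k (A : T -> 'M[R]_(m, k)) :
  measurable_mx A -> measurable_mx (fun w => (A w)^T).
Proof. by move=> mA i j; under eq_fun do rewrite mxE; exact: mA. Qed.

Lemma measurable_mx_row m k (A : T -> 'M[R]_(m, k)) i0 :
  measurable_mx A -> measurable_mx (fun w => row i0 (A w)).
Proof. by move=> mA i j; under eq_fun do rewrite mxE; exact: mA. Qed.

Lemma measurable_mx_row_mx m k1 k2 (A : T -> 'M[R]_(m, k1)) (B : T -> 'M[R]_(m, k2)) :
  measurable_mx A -> measurable_mx B -> measurable_mx (fun w => row_mx (A w) (B w)).
Proof.
move=> mA mB i j; rewrite -(splitK j); case: (fintype.split j) => j' /=.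
  by under eq_fun do rewrite row_mxEl; exact: mA.
by under eq_fun do rewrite row_mxEr; exact: mB.
Qed.

Lemma measurable_frob2 m k (A : T -> 'M[R]_(m, k)) :
  measurable_mx A -> measurable_fun setT (fun w => frob2 (A w)).
Proof.
move=> mA; apply: measurable_sum => i; apply: measurable_sum => j.
by under eq_fun do rewrite expr2; exact: measurable_funM.
Qed.

Lemma measurable_gt (f : T -> R) c :
  measurable_fun setT f -> measurable [set w | c < f w].
Proof.
move=> mf; rewrite -[X in measurable X]setTI -preimage_itvoy.
exact: mf measurableT _ (measurable_itv _).
Qed.

Lemma measurable_opnorm_gt m k (A : T -> 'M[R]_(m, k)) c :
  measurable_mx A -> 0 <= c -> measurable [set w | c < opnorm (A w)].
Proof.
move=> mA c0.
have -> : [set w | c < opnorm (A w)] = \bigcup_(z : 'cV[int]_k * nat)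
    [set w | frob2 (ratcV R z) < 1 /\ c ^+ 2 < frob2 (A w *m ratcV R z)].
  by apply/seteqP; split => w /=; rewrite opnorm_gt_ratcV // => -[z]; exists z.
apply: countable_bigcupT_measurable => [|z]; first exact: countableP.
have [z1|z1] := ltrP (frob2 (ratcV R z)) 1; last first.
  by rewrite [X in measurable X](_ : _ = set0) //; apply/seteqP; split => // w [].
rewrite [X in measurable X](_ : _ = [set w | c ^+ 2 < frob2 (A w *m ratcV R z)]).
  by apply/measurable_gt/measurable_frob2/measurable_mx_mulmx => //; exact: measurable_mx_cst.
by apply/seteqP; split => w /= => [[]|] //.
Qed.

Lemma measurable_bigmax_gt n (f : 'I_n -> T -> R) c : 0 <= c ->
  (forall i, measurable [set w | c < f i w]) ->
  measurable [set w | c < \big[Num.max/0]_(i < n) f i w].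
Proof.
move=> c0 mf; have -> : [set w | c < \big[Num.max/0]_(i < n) f i w] =
    \bigcup_(i : 'I_n) [set w | c < f i w].
  apply/seteqP; split => w /=; last by move=> [i _ /lt_le_trans]; apply; exact: le_bigmax.
  rewrite ltNge => /bigmax_leP max_gt; apply: contrapT => f_le.
  by apply: max_gt; split => // i _; rewrite leNgt; apply/negP => ci; apply: f_le; exists i.
by apply: countable_bigcupT_measurable => //; exact: countableP.
Qed.

End MeasurableMatrices.

Section NormalSecondMoment.
Variable R : realType.
Local Open Scope ereal_scope.

Lemma ge0_integral_normal_prob (m s : R) (f : R -> \bar R) :
  measurable_fun setT f -> (forall x, 0 <= f x) ->
  \int[normal_prob m s]_x f x = \int[lebesgue_measure]_x (f x * (normal_pdf m s x)%:E).
Proof.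
move=> mf f0; have numu := normal_prob_dominates m s.
rewrite -(Radon_Nikodym_SigmaFinite.change_of_variables numu _ measurableT mf) //.
have mRN := measurable_int _ (Radon_Nikodym_SigmaFinite.f_integrable numu).
have mpdf : measurable_fun setT (fun x => (normal_pdf m s x)%:E).
  by apply/measurable_EFinP; exact: measurable_normal_pdf.
apply: ae_eq_integral => //; [exact: emeasurable_funM|exact: emeasurable_funM|].
apply/ae_eqe_mul2l/ae_eq_sym/integral_ae_eq => //; first exact: integrable_normal_pdf.
by move=> A _ mA; rewrite -Radon_Nikodym_SigmaFinite.f_integral.
Qed.

Lemma sqr_mul_normal_pdf_le (s x : R) : (0 < s)%R ->
  (x ^+ 2 * normal_pdf 0 s x <=
   4 * s ^+ 2 * normal_peak s / normal_peak (Num.sqrt 2 * s) *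
     normal_pdf 0 (Num.sqrt 2 * s) x)%R.
Proof.
move=> s0; have s'0 : (Num.sqrt 2 * s != 0)%R by rewrite mulf_neq0 ?gt_eqF ?sqrtr_gt0.
rewrite (normal_pdfE _ (lt0r_neq0 s0)) (normal_pdfE _ s'0) /normal_fun !subr0.
have p'0 := normal_peak_gt0 s'0.
set y := (x ^+ 2 / (4 * s ^+ 2))%R.
have -> : (- x ^+ 2 / (s ^+ 2 *+ 2) = - y + - y)%R by rewrite /y; field; rewrite gt_eqF.
have -> : (- x ^+ 2 / ((Num.sqrt 2 * s) ^+ 2 *+ 2) = - y)%R.
  by rewrite exprMn sqr_sqrtr ?ler0n // /y; field; rewrite lt0r_neq0.
have -> : (x ^+ 2 = 4 * s ^+ 2 * y)%R by rewrite /y; field; rewrite gt_eqF.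
(* [y e^{-y} <= 1] absorbs the polynomial factor into half of the exponent *)
have ye_le1 : (y * expR (- y) <= 1)%R.
  rewrite expRN ler_pdivrMr ?expR_gt0 // mul1r.
  by apply: le_trans (expR_ge1Dx y); rewrite lerDr.
set C := (4 * s ^+ 2 * normal_peak s * expR (- y))%R.
rewrite expRD [X in (X <= _)%R](_ : _ = C * (y * expR (- y)))%R; last by rewrite /C; ring.
rewrite [X in (_ <= X)%R](_ : _ = C * 1)%R; last by rewrite /C; field; rewrite gt_eqF.
by rewrite ler_wpM2l // /C !mulr_ge0 ?normal_peak_ge0 ?expR_ge0 ?(ltW s0).
Qed.

Lemma normal_sqr_integral_bounded (s : R) : (0 < s)%R ->
  exists2 K : R, (0 <= K)%R & \int[normal_prob 0 s]_x (x ^+ 2)%:E <= K%:E.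
Proof.
move=> s0; set K := (4 * s ^+ 2 * normal_peak s / normal_peak (Num.sqrt 2 * s))%R.
exists K; first by rewrite /K !mulr_ge0 ?invr_ge0 ?normal_peak_ge0 ?(ltW s0).
have msq : measurable_fun setT (fun x : R => (x ^+ 2)%:E).
  by apply/measurable_EFinP; exact: exprn_measurable.
rewrite ge0_integral_normal_prob // => [|x]; last by rewrite lee_fin sqr_ge0.
apply: le_trans (_ : _ <= \int[lebesgue_measure]_x (K%:E * (normal_pdf 0 (Num.sqrt 2 * s) x)%:E)) _.
  apply: ge0_le_integral => //.
  - by move=> x _; rewrite -EFinM lee_fin mulr_ge0 ?sqr_ge0 ?normal_pdf_ge0.
  - by apply: emeasurable_funM => //; apply/measurable_EFinP; exact: measurable_normal_pdf.
  - by apply: emeasurable_funM => //; apply/measurable_EFinP; exact: measurable_normal_pdf.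
  - by move=> x _; rewrite -!EFinM lee_fin; exact: sqr_mul_normal_pdf_le.
by rewrite integralZl ?integral_normal_pdf ?mule1 //; exact: integrable_normal_pdf.
Qed.

End NormalSecondMoment.

Section MarkovBounds.
Context d (T : measurableType d) (R : realType) (P : probability T R).
Local Open Scope ereal_scope.

Lemma integral_sqr_normal_rv (X : {RV P >-> R}) (s : R) :
  (forall A, measurable A -> distribution P X A = normal_prob 0 s A) ->
  \int[P]_w ((X w) ^+ 2)%:E = \int[normal_prob 0 s]_x (x ^+ 2)%:E.
Proof.
move=> XN; have msq : measurable_fun [set: measurableTypeR R] (fun x => (x ^+ 2)%:E).
  by apply/measurable_EFinP; exact: exprn_measurable.
have mX : measurable_fun setT (X : T -> measurableTypeR R) := measurable_funPT X.
have := ge0_integral_pushforward mX P measurableT msq.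
rewrite preimage_setT => <-; last by move=> x _; rewrite lee_fin sqr_ge0.
by rewrite (eq_measure_integral (normal_prob 0 s)) // => A mA _; exact: XN.
Qed.

Lemma markov_nonneg (G : T -> R) (c B : R) : measurable_fun setT G ->
  (forall w, 0 <= G w)%R -> (0 < c)%R -> \int[P]_w (G w)%:E <= B%:E ->
  P [set w | c < G w]%R <= (B / c)%:E.
Proof.
move=> mG G0 c0 GB; have mGc : measurable [set w | c < G w]%R by exact: measurable_gt.
rewrite EFinM muleC lee_pdivlMl // -integral_cst //; apply: le_trans GB.
apply: le_trans (_ : _ <= \int[P]_(w in [set w | c < G w]%R) (G w)%:E) _.
  apply: ge0_le_integral => //.
  - by move=> w _; rewrite lee_fin ltW.
  - exact/measurable_EFinP/measurable_funTS.
  - by move=> w /ltW; rewrite lee_fin.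
apply: ge0_subset_integral => //; first exact/measurable_EFinP.
by move=> w _; rewrite lee_fin.
Qed.


Lemma ge0_integral_fsum_le (I : finType) (f : I -> T -> R) (K : R) :
  (forall i, measurable_fun setT (f i)) -> (forall i w, 0 <= f i w)%R ->
  (forall i, \int[P]_w (f i w)%:E <= K%:E) ->
  \int[P]_w (\sum_i f i w)%:E <= (#|I|%:R * K)%:E.
Proof.
move=> mf f0 fK; under eq_integral do rewrite -sumEFin.
rewrite ge0_integral_sum // => [|i|i w _]; last 2 first.
- exact/measurable_EFinP.
- by rewrite lee_fin.
by rewrite mulr_natl -sumr_const -sumEFin; apply: lee_sum => i _; exact: fK.
Qed.

Lemma measurable_mx_Emat n p (E : 'I_n -> 'I_p -> {RV P >-> R}) : measurable_mx (Emat E).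
Proof. by move=> i j; under eq_fun do rewrite mxE; exact: measurable_funPT. Qed.

Lemma frob2_Emat_tail n p (E : 'I_n -> 'I_p -> {RV P >-> R}) (K M : R) :
  (0 < n)%N -> (0 < M)%R ->
  (forall i j, \int[P]_w ((E i j w) ^+ 2)%:E <= K%:E) ->
  P [set w | M * n%:R < frob2 (Emat E w)]%R <= (p%:R * K / M)%:E.
Proof.
move=> n0 M0 EK; have EK' (ij : 'I_n * 'I_p) := EK ij.1 ij.2.
have nM0 : (0 < M * n%:R)%R by rewrite mulr_gt0 ?ltr0n.
rewrite (_ : (p%:R * K / M = n%:R * p%:R * K / (M * n%:R))%R); last first.
  by field; rewrite !gt_eqF ?ltr0n.
apply: markov_nonneg nM0 _ => [|w|]; [exact/measurable_frob2/measurable_mx_Emat|exact: frob2_ge0|].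
have frob2E w : frob2 (Emat E w) = (\sum_(ij : 'I_n * 'I_p) E ij.1 ij.2 w ^+ 2)%R.
  by rewrite /frob2 pair_big; apply: eq_bigr => ij _; rewrite mxE.
under eq_integral do rewrite frob2E.
apply: le_trans (ge0_integral_fsum_le _ _ EK') _ => [ij|ij w|].
- by under eq_fun do rewrite expr2; apply: measurable_funM; exact: measurable_funPT.
- exact: sqr_ge0.
- by rewrite card_prod !card_ord natrM.
Qed.

End MarkovBounds.

Section DesignAsymptotics.
Variables (R : realType) (e : nat) (X : forall n : nat, 'M[R]_(n, e)).

Lemma frob2_design_bound (Sigma : 'M[R]_e) :
  (forall j k, (fun n : nat => (n%:R)^-1 * ((X n)^T *m X n) j k) @ \oo --> Sigma j k) ->
  \forall n \near \oo, frob2 (X n) <= (\sum_l (`|Sigma l l| + 1)) * n%:R.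
Proof.
move=> XXS; have diag_lt : \forall n \near \oo,
    forall l, (n%:R)^-1 * ((X n)^T *m X n) l l < `|Sigma l l| + 1.
  apply: filter_forall => l; apply: cvgr_lt (XXS l l) _ _.
  by rewrite (le_lt_trans (ler_norm _)) // ltrDl.
near=> n; have n0 : 0 < n%:R :> R by rewrite ltr0n; near: n; exact: nbhs_infty_gt.
have diag_ltn : forall l, (n%:R)^-1 * ((X n)^T *m X n) l l < `|Sigma l l| + 1.
  by near: n; exact: diag_lt.
rewrite frob2_mxtrace mulr_suml; apply: ler_sum => l _.
by rewrite -ler_pdivrMr // mulrC ltW.
Unshelve. all: end_near.
Qed.

Lemma rnorm_row_o_sqrt :
  (fun n : nat => (\big[Num.max/0]_(i < n) rnorm (row i (X n))) / powR n%:R 3^-1)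
    @ \oo --> 0 ->
  forall eta, 0 < eta ->
  \forall n \near \oo, forall i : 'I_n, rnorm (row i (X n)) <= eta * Num.sqrt n%:R.
Proof.
move=> max_o eta eta0; near=> n.
have max_lt : `|\big[Num.max/0]_(i < n) rnorm (row i (X n)) / powR n%:R 3^-1| < eta.
  by near: n; exact: cvgr0_norm_lt _ max_o _ eta0.
move=> i.
have n1 : 1 <= n%:R :> R by rewrite ler1n; near: n; exact: nbhs_infty_gt.
have cube0 : 0 < powR n%:R 3^-1 :> R by rewrite powR_gt0 // (lt_le_trans ltr01).
have max0 : 0 <= \big[Num.max/0]_(i < n) rnorm (row i (X n)) by exact: bigmax_ge_id.
move: max_lt; rewrite ger0_norm ?ltr_pdivrMr // => [max_lt|]; last by rewrite divr_ge0 // ltW.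
apply: le_trans (le_bigmax _ (fun i => rnorm (row i (X n))) i) _.
apply: le_trans (ltW max_lt) _; rewrite ler_wpM2l ?(ltW eta0) // -powR12_sqrt ?(le_trans ler01) //.
by rewrite ler_powR // lef_pV2 ?posrE // ler_nat.
Unshelve. all: end_near.
Qed.

End DesignAsymptotics.

Section ZtildeBounds.
Context d (T : measurableType d) (R : realType) (P : probability T R).
Variables (e p : nat) (X : forall n : nat, 'M[R]_(n, e)) (Gamma : 'M[R]_(e, p)).
Variables (E : forall n : nat, 'I_n -> 'I_p -> {RV P >-> R}) (K C : R).
Arguments E : clear implicits.
Hypothesis K0 : 0 <= K.
Hypothesis EK : forall n i j, (\int[P]_w ((E n i j w) ^+ 2)%:E <= K%:E)%E.
Hypothesis C0 : 0 <= C.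
Hypothesis XC : \forall n \near \oo, frob2 (X n) <= C * n%:R.

Local Notation Zt n w := (Ztilde (X n) Gamma (Emat (E n) w)).

Lemma measurable_mx_Ztilde n : measurable_mx (fun w => Zt n w).
Proof.
apply: measurable_mx_row_mx; first exact: measurable_mx_cst.
by apply: measurable_mxD; [exact: measurable_mx_cst|exact: measurable_mx_Emat].
Qed.

Lemma frob2_Ztilde_OP (delta : R) : 0 < delta -> exists2 D : R, 0 < D &
  \forall n \near \oo, (P [set w | (D * n%:R < frob2 (Zt n w))%R] <= delta%:E)%E.
Proof.
move=> delta0; pose M := p%:R * K / delta + 1.
have pK0 : 0 <= p%:R * K / delta by rewrite divr_ge0 ?mulr_ge0 ?(ltW delta0).
have M0 : 0 < M by rewrite /M; lra.
exists (1 + 2 * C * frob2 Gamma + 2 * M); first by have := mulr_ge0 C0 (frob2_ge0 Gamma); lra.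
near=> n; have n0 : (0 < n)%N by near: n; exact: nbhs_infty_gt.
have XCn : frob2 (X n) <= C * n%:R by near: n; exact: XC.
apply: (@le_trans _ _ (P [set w | (M * n%:R < frob2 (Emat (E n) w))%R])).
  apply: le_measure; rewrite ?inE.
  - exact/measurable_gt/measurable_frob2/measurable_mx_Ztilde.
  - exact/measurable_gt/measurable_frob2/measurable_mx_Emat.
  move=> w /=; rewrite !ltNge => /negP Zgt; apply/negP => EM.
  by apply: Zgt; exact: frob2_Ztilde_le.
apply: le_trans (frob2_Emat_tail n0 M0 (@EK n)) _.
by rewrite lee_fin ler_pdivrMr // mulrDr mulr1 mulrCA divff ?gt_eqF // mulr1 lerDl ltW.
Unshelve. all: end_near.
Qed.

Lemma Ztilde_tr_mulmx_OP :
  OP_bound P (fun n w => opnorm ((Zt n w)^T *m X n)) (fun n => n%:R).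
Proof.
move=> delta delta0; have [D D0 ZD] := frob2_Ztilde_OP delta0.
exists (Num.sqrt (D * C) + 1); split; first by rewrite (lt_le_trans ltr01) // lerDr sqrtr_ge0.
near=> n; have XCn : frob2 (X n) <= C * n%:R by near: n; exact: XC.
have ZDn : (P [set w | (D * n%:R < frob2 (Zt n w))%R] <= delta%:E)%E by near: n; exact: ZD.
apply: le_trans ZDn; apply: le_measure; rewrite ?inE.
- apply: measurable_opnorm_gt; last by rewrite mulr_ge0 ?addr_ge0 ?sqrtr_ge0.
  apply: measurable_mx_mulmx; last exact: measurable_mx_cst.
  exact/measurable_mx_tr/measurable_mx_Ztilde.
- exact/measurable_gt/measurable_frob2/measurable_mx_Ztilde.
move=> w /=; rewrite !ltNge => /negP Ygt; apply/negP => ZDw; apply: Ygt.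
apply: le_trans (opnorm_trmx_mulmx_le _ _) _.
apply: (@le_trans _ _ (Num.sqrt (D * C) * n%:R)); last by rewrite ler_wpM2r ?ler0n ?lerDl.
rewrite -[n%:R in X in _ <= X]ger0_norm // -sqrtr_sqr -sqrtrM ?mulr_ge0 ?(ltW D0) //.
rewrite ler_sqrt ?mulr_ge0 ?sqr_ge0 ?(ltW D0) // (_ : _ * _ ^+ 2 = D * n%:R * (C * n%:R)).
  exact: ler_pM (frob2_ge0 _) (frob2_ge0 _) ZDw XCn.
by rewrite expr2; ring.
Unshelve. all: end_near.
Qed.

Lemma Ztilde_row'_oP :
  (forall eta, 0 < eta -> \forall n \near \oo,
     forall i : 'I_n, rnorm (row i (X n)) <= eta * Num.sqrt n%:R) ->
  oP_bound P (fun n w => \big[Num.max/0]_(i < n)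
      opnorm ((Zt n w)^T *m X n - (row' i (Zt n w))^T *m row' i (X n)))
    (fun n => n%:R).
Proof.
move=> rows eps delta eps0 delta0; have [D D0 ZD] := frob2_Ztilde_OP delta0.
have eta0 : 0 < eps / Num.sqrt D by rewrite divr_gt0 ?sqrtr_gt0.
near=> n.
have ZDn : (P [set w | (D * n%:R < frob2 (Zt n w))%R] <= delta%:E)%E by near: n; exact: ZD.
have rowsn : forall i : 'I_n, rnorm (row i (X n)) <= eps / Num.sqrt D * Num.sqrt n%:R.
  by near: n; exact: rows _ eta0.
have epsn0 : 0 <= eps * n%:R by rewrite mulr_ge0 ?(ltW eps0).
apply: le_trans ZDn; apply: le_measure; rewrite ?inE.
- apply: measurable_bigmax_gt => // i; apply: measurable_opnorm_gt => // a b.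
  under eq_fun do rewrite mulmx_tr_row'.
  apply: measurable_mx_mulmx; last exact: measurable_mx_cst.
  exact/measurable_mx_tr/measurable_mx_row/measurable_mx_Ztilde.
- exact/measurable_gt/measurable_frob2/measurable_mx_Ztilde.
move=> w /=; rewrite !ltNge => /negP Ygt; apply/negP => ZDw; apply: Ygt.
apply/bigmax_leP; split => // i _; apply: le_trans (opnorm_row'_le _ _ i) _.
have sD0 : 0 < Num.sqrt D by rewrite sqrtr_gt0.
rewrite (_ : eps * n%:R = Num.sqrt (D * n%:R) * (eps / Num.sqrt D * Num.sqrt n%:R)).
  by rewrite ler_pM ?sqrtr_ge0 ?ler_sqrt // mulr_ge0 ?(ltW D0).
rewrite sqrtrM ?(ltW D0) // -[in LHS](@sqr_sqrtr _ n%:R) //.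
by field; rewrite gt_eqF.
Unshelve. all: end_near.
Qed.

End ZtildeBounds.

Theorem lemma4 (d : measure_display) (T : measurableType d) (R : realType)
  (P : probability T R) (e p : nat)
  (X : forall n : nat, 'M[R]_(n, e)) (Gamma : 'M[R]_(e, p))
  (sigma sigmaz : R) (lambda : nat -> R) (beta0 : nat -> 'cV[R]_e)
  (kappa : R) (alpha0 : 'cV[R]_e) (Sigma : 'M[R]_e) (Theta : 'rV[R]_e)
  (E : forall n : nat, 'I_n -> 'I_p -> {RV P >-> R})
  (eps : forall n : nat, 'I_n -> {RV P >-> R})
  (y : forall n : nat, T -> 'cV[R]_n) :
  0 < sigma -> 0 < sigmaz ->
  (forall n, 0 <= lambda n) ->
  (* y = X beta0 + epsilon *)
  (forall n w, y n w = X n *m beta0 n + \col_i eps n i w) ->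
  (* entries of E i.i.d. N(0, sigmaz^2), of eps i.i.d. N(0, sigma^2),
     E and eps independent *)
  (forall n i j A, measurable A ->
     distribution P (E n i j) A = normal_prob 0 sigmaz A) ->
  (forall n i A, measurable A ->
     distribution P (eps n i) A = normal_prob 0 sigma A) ->
  (forall n, mutually_independent
     (fun k : ('I_n * 'I_p) + 'I_n =>
        match k with inl ij => E n ij.1 ij.2 | inr i => eps n i end)) ->
  (* asymptotic assumptions *)
  0 <= kappa ->
  (fun n : nat => lambda n / n%:R) @ \oo --> kappa ->
  (forall j, (fun n : nat => Num.sqrt (n%:R) * beta0 n j 0) @ \oo --> alpha0 j 0) ->
  posdef Sigma ->
  (forall j k, (fun n : nat => (n%:R)^-1 * ((X n)^T *m X n) j k) @ \oo --> Sigma j k) ->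
  (forall k, (fun n : nat => (n%:R)^-1 * ((const_mx 1 : 'rV[R]_n) *m X n) 0 k)
                @ \oo --> Theta 0 k) ->
  (fun n : nat => (\big[Num.max/0]_(i < n) rnorm (row i (X n)))
                    / powR (n%:R) (3^-1)) @ \oo --> 0 ->
  OP_bound P (fun n w => opnorm ((Ztilde (X n) Gamma (Emat (E n) w))^T *m X n))
          (fun n => n%:R) /\
  oP_bound P (fun n w => \big[Num.max/0]_(i < n)
        opnorm ((Ztilde (X n) Gamma (Emat (E n) w))^T *m X n
                - (row' i (Ztilde (X n) Gamma (Emat (E n) w)))^T *m row' i (X n)))
          (fun n => n%:R).
Proof.
move=> _ sz0 _ _ EN _ _ _ _ _ _ XXS _ max_rows.
have [K K0 EK] := normal_sqr_integral_bounded sz0.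
have {}EK n i j : (\int[P]_w ((E n i j w) ^+ 2)%:E <= K%:E)%E.
  by rewrite (integral_sqr_normal_rv (EN n i j)).
have C0 : 0 <= \sum_l (`|Sigma l l| + 1) by apply: sumr_ge0 => l _; rewrite addr_ge0.
split; first exact: Ztilde_tr_mulmx_OP K0 EK C0 (frob2_design_bound XXS).
exact: Ztilde_row'_oP K0 EK C0 (frob2_design_bound XXS) (rnorm_row_o_sqrt max_rows).
Qed.
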